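(* Let $q$ be a prime power and $L\in\mathbb{F}_q[x]$ a $q$-polynomial of $q$-degree $n$ such that $L(x)/x$ is irreducible in $\mathbb{F}_q[x]$. Let $E$ be a splitting field of $L$ over $\mathbb{F}_q$ and $V\subseteq E$ the $\mathbb{F}_q$-space of roots of $L$. For any ordered $\mathbb{F}_q$-basis $v_1,\dots,v_n$ of $V$ and $r\geq 1$, let $\epsilon_r:H_{n,r}(\mathbb{F}_q)\to E$, $\epsilon_r(P)=P(v_1,\dots,v_n)$. Then $\epsilon_r$ is injective for $1\leq r\leq q-1$.
   Context: $H_{n,r}(\mathbb{F}_q)$ is the space of homogeneous polynomials of degree $r$ in $\mathbb{F}_q[x_1,\dots,x_n]$ together with $0$. A $q$-polynomial of $q$-degree $n$ is $\sum_{i=0}^n a_ix^{q^i}$ with $a_n\neq0$. *)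

From HB Require Import structures.
From mathcomp Require Import all_boot all_order all_algebra all_field.
From mathcomp Require Import mpoly.
Set Implicit Arguments. Unset Strict Implicit. Unset Printing Implicit Defensive.
Import GRing.Theory.
Local Open Scope ring_scope.

Definition homog_deg (F : ringType) (n r : nat) (P : {mpoly F[n]}) : bool :=
  all (fun m : 'X_{1..n} => mdeg m == r) (msupp P).

Definition is_qpoly (F : ringType) (q n : nat) (L : {poly F}) : Prop :=
  exists a : 'I_n.+1 -> F,
    a ord_max != 0 /\ L = \sum_(i < n.+1) a i *: 'X^(q ^ i).

Definition eval_at (F : fieldType) (E : fieldExtType F) (n : nat)
  (v : n.-tuple E) (P : {mpoly F[n]}) : E :=
  mmap (in_alg E) (tnth v) P.

From mathcomp Require Import all_boot all_order all_algebra all_field.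
From mathcomp Require Import mpoly.
From mathcomp Require Import zify.
Set Implicit Arguments. Unset Strict Implicit. Unset Printing Implicit Defensive.
Import GRing.Theory.
Local Open Scope ring_scope.

(* Write L = 'X * f, so that f is irreducible of degree q^n - 1, and pick a
   nonzero root w of L.  Distinct monomials m of degree r < q have distinct
   base-q expansions e(m) = sum_i m_i q^i, all lying in [1, q^n); hence for a
   form D of degree r, D(w, w^q, ..., w^(q^(n-1))) = w * g(w) for a polynomial
   g of degree < deg f whose coefficients are those of D, and irreducibility
   of f forces D = 0.  As x |-> x^q maps roots of L to roots of L, the case
   r = 1 shows that w, w^q, ..., w^(q^(n-1)) is a basis of V; any other basis
   is obtained from it by an invertible linear substitution of the variables,
   which preserves forms of degree r. *)

Lemma eq_mmap (n : nat) (R S : nzRingType) (f : {additive R -> S})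
    (h1 h2 : 'I_n -> S) (p : {mpoly R[n]}) :
  h1 =1 h2 -> mmap f h1 p = mmap f h2 p.
Proof.
by move=> eq_h; apply: eq_bigr => m _; rewrite (mmap1_eq _ eq_h).
Qed.

Lemma mmap_comp_mpoly (n k : nat) (R S : comNzRingType) (f : {rmorphism R -> S})
    (h : 'I_k -> S) (lq : n.-tuple {mpoly R[k]}) (p : {mpoly R[n]}) :
  mmap f h (p \mPo lq) = mmap f (fun i => mmap f h (tnth lq i)) p.
Proof.
rewrite comp_mpolyEX [in RHS](mpolyE p) !raddf_sum /=.
apply: eq_bigr => m _; rewrite !mmapZ comp_mpolyX mmapX rmorph_prod /=.
by congr (_ * _); apply: eq_bigr => i _; rewrite rmorphXn.
Qed.

Lemma comp_mpolyA (n k l : nat) (R : comNzRingType) (p : {mpoly R[n]})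
    (lq : n.-tuple {mpoly R[k]}) (lr : k.-tuple {mpoly R[l]}) :
  p \mPo lq \mPo lr = p \mPo [tuple tnth lq i \mPo lr | i < n].
Proof.
rewrite [in LHS]/comp_mpoly mmap_comp_mpoly.
by apply: eq_mmap => i; rewrite tnth_mktuple.
Qed.

Lemma comp_mpoly_dhomog (n k d e : nat) (R : comNzRingType)
    (lq : n.-tuple {mpoly R[k]}) (p : {mpoly R[n]}) :
  (forall i, tnth lq i \is e.-homog) -> p \is d.-homog ->
  p \mPo lq \is (d * e).-homog.
Proof.
move=> lq_homog /dhomogP p_homog; rewrite comp_mpolyEX big_seq.
apply: rpred_sum => m /p_homog <-; apply: dhomogZ.
have -> : (mdeg m * e = \sum_(i < n) e * m i)%N.
  by rewrite mdegE big_distrl /=; apply: eq_bigr => i _; rewrite mulnC.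
rewrite comp_mpolyX.
apply: (big_ind2 (fun (s : {mpoly R[k]}) (d : nat) => s \is d.-homog)).
- exact: dhomog1.
- by move=> s1 d1 s2 d2; apply: dhomogM.
- by move=> i _; apply: dhomogMn.
Qed.

Section LinearSubstitution.
Context {R : comNzRingType} {n : nat}.

Definition lin_subst (A : 'M[R]_n) : n.-tuple {mpoly R[n]} :=
  [tuple \sum_j A i j *: 'X_j | i < n].

Lemma linear_form_dhomog (c : 'I_n -> R) : \sum_j c j *: 'X_j \is 1.-homog.
Proof.
by apply: rpred_sum => j _; apply: dhomogZ; rewrite dhomogX; apply/eqP; exact: mdeg1.
Qed.

Lemma mmap_linear_form (S : comNzRingType) (f : {rmorphism R -> S}) (h : 'I_n -> S)
    (c : 'I_n -> R) :
  mmap f h (\sum_j c j *: 'X_j) = \sum_j f (c j) * h j.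
Proof. by rewrite raddf_sum /=; apply: eq_bigr => j _; rewrite mmapZ mmapX mmap1U. Qed.

Lemma lin_subst_dhomog A i : tnth (lin_subst A) i \is 1.-homog.
Proof. by rewrite tnth_mktuple linear_form_dhomog. Qed.

Lemma comp_lin_subst A B :
  [tuple tnth (lin_subst A) i \mPo lin_subst B | i < n] = lin_subst (A *m B).
Proof.
apply: eq_from_tnth => i; rewrite !tnth_mktuple raddf_sum /=.
under eq_bigr do rewrite comp_mpolyZ comp_mpolyXU -tnth_nth tnth_mktuple scaler_sumr.
rewrite exchange_big /=; apply: eq_bigr => j _.
by rewrite mxE scaler_suml; apply: eq_bigr => k _; rewrite scalerA.
Qed.

Lemma lin_subst1 : lin_subst 1%:M = [tuple 'X_i | i < n].
Proof.
apply: eq_from_tnth => i; rewrite !tnth_mktuple (bigD1 i) //= mxE eqxx scale1r.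
by rewrite big1 ?addr0 // => j /negbTE ji; rewrite mxE eq_sym ji scale0r.
Qed.

Lemma comp_lin_subst_eq0 A B p :
  A *m B = 1%:M -> p \mPo lin_subst A = 0 -> p = 0.
Proof.
move=> AB1 pA0.
by rewrite -[p]comp_mpoly_id -lin_subst1 -AB1 -comp_lin_subst -comp_mpolyA pA0 comp_mpoly0.
Qed.

End LinearSubstitution.

Section CoordinateMatrix.
Context {K : fieldType} {V : vectType K} {n : nat}.

Definition coord_mx (X Y : n.-tuple V) : 'M[K]_n :=
  \matrix_(i, j) coord X j (tnth Y i).

Lemma coord_mx_free (X : n.-tuple V) : free X -> coord_mx X X = 1%:M.
Proof. by move=> freeX; apply/matrixP => i j; rewrite !mxE (tnth_nth 0) coord_free. Qed.

Lemma coord_span_tnth (X : n.-tuple V) y :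
  y \in <<X>>%VS -> y = \sum_j coord X j y *: tnth X j.
Proof.
by move=> /coord_span {1}->; apply: eq_bigr => j _; rewrite (tnth_nth 0).
Qed.

Lemma mulmx_coord_mx (X Y Z : n.-tuple V) :
  (forall i, tnth Y i \in <<Z>>%VS) -> coord_mx Z Y *m coord_mx X Z = coord_mx X Y.
Proof.
move=> YZ; apply/matrixP => i j; rewrite !mxE [in RHS](coord_span_tnth (YZ i)).
by rewrite linear_sum; apply: eq_bigr => k _; rewrite linearZ !mxE.
Qed.

End CoordinateMatrix.

Lemma base_expansion_inj (q n : nat) (a b : 'I_n -> nat) :
  (forall i, a i < q)%N -> (forall i, b i < q)%N ->
  (\sum_(i < n) a i * q ^ i = \sum_(i < n) b i * q ^ i)%N -> a =1 b.
Proof.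
elim: n a b => [|n IHn] a b a_lt b_lt; first by move=> _ [] [].
have q_gt0 : (0 < q)%N by apply: leq_ltn_trans (a_lt ord0).
have shift (c : 'I_n.+1 -> nat) : (\sum_(i < n.+1) c i * q ^ i =
    c ord0 + q * \sum_(i < n) c (lift ord0 i) * q ^ i)%N.
  rewrite big_ord_recl muln1 big_distrr /=; congr (_ + _)%N.
  by apply: eq_bigr => i _; rewrite expnS mulnCA.
rewrite !shift => eq_ab.
have eq0 : a ord0 = b ord0.
  have := congr1 (modn^~ q) eq_ab.
  by rewrite /= !(addnC (_ ord0)) !(mulnC q) !modnMDl !modn_small.
move: eq_ab; rewrite eq0 => /addnI /eqP; rewrite eqn_pmul2l // => /eqP eq_tail.
move=> i; case: (unliftP ord0 i) => [j ->|-> //].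
exact: (IHn (fun j => a (lift ord0 j)) (fun j => b (lift ord0 j))).
Qed.

Definition mnm_expansion (q : nat) {n : nat} (m : 'X_{1..n}) : nat :=
  \sum_(i < n) m i * q ^ i.

Lemma mnm_le_mdeg (n : nat) (m : 'X_{1..n}) i : (m i <= mdeg m)%N.
Proof. by rewrite mdegE (bigD1 i) //= leq_addr. Qed.

Lemma mnm_expansion_inj (q n : nat) (m1 m2 : 'X_{1..n}) :
  (mdeg m1 < q)%N -> (mdeg m2 < q)%N ->
  mnm_expansion q m1 = mnm_expansion q m2 -> m1 = m2.
Proof.
move=> m1_lt m2_lt eq12; apply/mnmP.
apply: (@base_expansion_inj q n (fun i => m1 i) (fun i => m2 i) _ _ eq12) => i /=.
- exact: leq_ltn_trans _ (mnm_le_mdeg m1 i) m1_lt.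
- exact: leq_ltn_trans _ (mnm_le_mdeg m2 i) m2_lt.
Qed.

Lemma mnm_expansion_gt0 (q n : nat) (m : 'X_{1..n}) :
  (0 < q)%N -> (0 < mdeg m)%N -> (0 < mnm_expansion q m)%N.
Proof.
move=> q_gt0 m_gt0; apply: (leq_trans m_gt0); rewrite mdegE; apply: leq_sum => i _.
by rewrite leq_pmulr // expn_gt0 q_gt0.
Qed.

Lemma mnm_expansion_lt (q n : nat) (m : 'X_{1..n}) :
  (mdeg m < q)%N -> (mnm_expansion q m < q ^ n)%N.
Proof.
case: n m => [|k] m m_lt; first by rewrite /mnm_expansion big_ord0.
have q_gt0 : (0 < q)%N by case: q m_lt.
apply: (@leq_ltn_trans (mdeg m * q ^ k)).
  rewrite mdegE big_distrl /=; apply: leq_sum => i _.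
  by rewrite leq_mul2l (leq_pexp2l q_gt0) ?orbT // -ltnS.
by rewrite expnS ltn_pmul2r ?expn_gt0 ?q_gt0.
Qed.

Lemma coef_sum_scale_Xn (R : nzRingType) (I : eqType) (s : seq I)
    (c : I -> R) (e : I -> nat) (i0 : I) :
  uniq s -> {in s &, injective e} -> i0 \in s ->
  (\sum_(i <- s) c i *: 'X^(e i))`_(e i0) = c i0.
Proof.
move=> s_uniq e_inj i0s; rewrite coef_sum (bigD1_seq i0) //= coefZ coefXn eqxx mulr1.
rewrite big_seq_cond big1 ?addr0 // => i /andP[i_s i_neq0].
rewrite coefZ coefXn; have [/(e_inj _ _ i0s i_s) eq_i|] := eqVneq (e i0) (e i).
  by rewrite eq_i eqxx in i_neq0.
by rewrite mulr0.
Qed.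

Lemma size_sum_scale_Xn (R : nzRingType) (I : eqType) (s : seq I)
    (c : I -> R) (e : I -> nat) (N : nat) :
  {in s, forall i, e i < N}%N -> (size (\sum_(i <- s) c i *: 'X^(e i))%R <= N)%N.
Proof.
move=> e_lt; rewrite big_seq; apply: (big_ind (fun p : {poly R} => size p <= N)%N).
- by rewrite size_poly0.
- by move=> p1 p2 p1_le p2_le; rewrite (leq_trans (size_polyD _ _)) // geq_max p1_le.
- by move=> i /e_lt; apply: leq_trans; rewrite (leq_trans (size_scale_leq _ _)) ?size_polyXn.
Qed.

Lemma irredp_root_size_lt (F E : fieldType) (iota : {rmorphism F -> E})
    (f p : {poly F}) (w : E) :
  irreducible_poly f -> root (map_poly iota f) w ->
  (size p < size f)%N -> root (map_poly iota p) w -> p = 0.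
Proof.
move=> f_irr fw p_small pw; apply/eqP; apply: contraLR p_small => p_neq0.
rewrite -leqNgt; set g := gcdp p f.
have gw : root (map_poly iota g) w by rewrite gcdp_map root_gcd pw fw.
have g_nconst : size g != 1%N.
  apply: contraTneq gw => g1; have : size (map_poly iota g) == 1%N by rewrite size_map_poly g1.
  by case/size_poly1P => c c_neq0 ->; rewrite rootC.
have /eqp_dvdl f_dvd_p := apply_irredp f_irr g_nconst (dvdp_gcdr p f).
by apply: dvdp_leq p_neq0 _; rewrite -f_dvd_p dvdp_gcdl.
Qed.

Lemma pnat_pchar_card (F : finFieldType) (A : lalgType F) : [pchar A].-nat #|F|.
Proof.
have [p p_prime pchar_p] := finPcharP F.
rewrite (eq_pnat _ (pchar_lalg A)) (card_pprimeChar pchar_p) pnatX pnatE //.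
by rewrite pchar_p.
Qed.

Lemma horner_map_expr_card (F : finFieldType) (E : comAlgType F) (p : {poly F}) (x : E) :
  (map_poly (in_alg E) p).[x] ^+ #|F| = (map_poly (in_alg E) p).[x ^+ #|F|].
Proof.
have exprD_card : {morph (fun y : E => y ^+ #|F|) : y z / y + z}.
  by move=> y z; apply: exprDn_pchar; apply: pnat_pchar_card.
rewrite !horner_coef (big_morph _ exprD_card (expr0n _ _)) (gtn_eqF (ltnW (finNzRing_gt1 F))).
apply: eq_bigr => i _; rewrite exprMn coef_map -rmorphXn expf_card.
by rewrite -!exprM mulnC.
Qed.

Lemma root_map_expr_card (F : finFieldType) (E : comAlgType F) (p : {poly F}) (x : E) k :
  root (map_poly (in_alg E) p) x -> root (map_poly (in_alg E) p) (x ^+ (#|F| ^ k)).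
Proof.
move=> px; elim: k => [|k IHk]; first by rewrite expn0 expr1.
apply/rootP; rewrite expnSr exprM -horner_map_expr_card (rootP IHk) expr0n.
by rewrite (gtn_eqF (ltnW (finNzRing_gt1 F))).
Qed.

Section QPolynomial.
Variables (F : fieldType) (q n : nat) (L : {poly F}).
Hypotheses (q_gt1 : (1 < q)%N) (L_qpoly : is_qpoly q n L).

Lemma size_qpoly : size L = (q ^ n).+1.
Proof.
have [a [a_neq0 ->]] := L_qpoly; rewrite big_ord_recr /= addrC size_polyDl.
  by rewrite size_scale // size_polyXn.
rewrite size_scale // size_polyXn ltnS size_sum_scale_Xn // => i _.
by rewrite ltn_exp2l.
Qed.

Lemma qpoly_divpXK : L %/ 'X * 'X = L.
Proof.
apply: divpK; rewrite -[X in X %| _]subr0 -polyC0 dvdp_XsubCl.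
have [a [_ ->]] := L_qpoly; apply/rootP; rewrite horner_sum big1 // => i _.
by rewrite hornerZ hornerXn expr0n expn_eq0 (gtn_eqF (ltnW q_gt1)) mulr0.
Qed.

Lemma size_qpoly_divpX : size (L %/ 'X) = (q ^ n)%N.
Proof. by rewrite size_divp ?polyX_eq0 // size_qpoly size_polyX subn1. Qed.

End QPolynomial.

Lemma mmap1_expr_expansion (R : comNzRingType) (w : R) (q n : nat) (m : 'X_{1..n}) :
  mmap1 (fun i : 'I_n => w ^+ (q ^ i)) m = w ^+ mnm_expansion q m.
Proof.
rewrite /mmap1 /mnm_expansion -prodrXr; apply: eq_bigr => i _.
by rewrite -exprM mulnC.
Qed.

Section FormsEvaluation.
Variables (F : fieldType) (E : fieldExtType F) (n : nat).

Lemma free_forms_eval (z : n.-tuple E) :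
  (forall D : {mpoly F[n]}, D \is 1.-homog -> mmap (in_alg E) (tnth z) D = 0 -> D = 0) ->
  free z.
Proof.
move=> z_sep; apply/freeP => c cz0 i.
have D0 : \sum_j c j *: 'X_j = 0 :> {mpoly F[n]}.
  apply: z_sep; first exact: linear_form_dhomog.
  rewrite mmap_linear_form -[in RHS]cz0; apply: eq_bigr => j _.
  by rewrite mulr_algl (tnth_nth 0).
have := congr1 (mcoeff U_(i)) D0; rewrite mcoeff0 raddf_sum (bigD1 i) //=.
rewrite mcoeffZ mcoeffXU eqxx mulr1 big1 ?addr0 // => j /negbTE ji.
by rewrite mcoeffZ mcoeffXU ji mulr0.
Qed.

Lemma forms_eval_eq0_change_basis (r : nat) (z v : n.-tuple E) :
  free v -> (forall i, tnth v i \in <<z>>%VS) ->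
  (forall D : {mpoly F[n]}, D \is r.-homog -> mmap (in_alg E) (tnth z) D = 0 -> D = 0) ->
  forall D : {mpoly F[n]}, D \is r.-homog -> mmap (in_alg E) (tnth v) D = 0 -> D = 0.
Proof.
move=> v_free v_in_z z_sep D D_homog vD0.
apply: (@comp_lin_subst_eq0 _ _ (coord_mx z v) (coord_mx v z)).
  by rewrite mulmx_coord_mx // coord_mx_free.
apply: z_sep.
  by rewrite -[r]muln1; apply: comp_mpoly_dhomog => // i; apply: lin_subst_dhomog.
rewrite mmap_comp_mpoly -vD0; apply: eq_mmap => i.
rewrite tnth_mktuple mmap_linear_form [RHS](coord_span_tnth (v_in_z i)).
by apply: eq_bigr => j _; rewrite mxE mulr_algl.
Qed.

Lemma forms_eval_pow_orbit_eq0 (f : {poly F}) (w : E) (q r : nat)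
    (D : {mpoly F[n]}) :
  irreducible_poly f -> root (map_poly (in_alg E) f) w -> w != 0 ->
  size f = (q ^ n)%N -> (0 < r < q)%N -> D \is r.-homog ->
  mmap (in_alg E) (fun i => w ^+ (q ^ i)) D = 0 -> D = 0.
Proof.
move=> f_irr fw w_neq0 size_f /andP[r_gt0 r_lt_q] /dhomogP D_homog Dw.
have q_gt0 : (0 < q)%N := ltn_trans r_gt0 r_lt_q.
have mdeg_lt m : m \in msupp D -> (mdeg m < q)%N by move/D_homog->.
have expansion_gt0 m : m \in msupp D -> (0 < mnm_expansion q m)%N.
  by move=> m_supp; rewrite mnm_expansion_gt0 // D_homog.
pose e (m : 'X_{1..n}) := (mnm_expansion q m).-1.
have e_inj : {in msupp D &, injective e}.
  move=> m1 m2 m1_supp m2_supp /(congr1 S); rewrite !prednK ?expansion_gt0 //.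
  by apply: mnm_expansion_inj; apply: mdeg_lt.
pose p := \sum_(m <- msupp D) D@_m *: 'X^(e m).
have p0 : p = 0.
  apply: (irredp_root_size_lt f_irr fw).
    have size_p : (size p <= (q ^ n).-1)%N.
      apply: size_sum_scale_Xn => m m_supp.
      have := mnm_expansion_lt (mdeg_lt m m_supp); have := expansion_gt0 m m_supp.
      by rewrite /e; lia.
    have qn_gt0 : (0 < q ^ n)%N by rewrite expn_gt0 q_gt0.
    by rewrite size_f -(prednK qn_gt0) ltnS.
  apply/rootP/(mulIf w_neq0); rewrite mul0r -Dw /mmap rmorph_sum /= horner_sum mulr_suml.
  apply: eq_big_seq => m m_supp; rewrite map_polyZ map_polyXn hornerZ hornerXn.
  by rewrite -mulrA -exprSr prednK ?expansion_gt0 // mmap1_expr_expansion.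
apply/mpolyP => m; rewrite mcoeff0.
have [m_supp|] := boolP (m \in msupp D); last by rewrite mcoeff_msupp negbK => /eqP.
have := @coef_sum_scale_Xn _ _ _ (fun m => D@_m) e m (msupp_uniq D) e_inj m_supp.
by rewrite -/p p0 coef0.
Qed.

End FormsEvaluation.

Theorem theorem7p3 (F : finFieldType) (q : nat) (hq : #|F| = q)
  (n : nat) (L : {poly F}) (hL : is_qpoly q n L)
  (hirr : irreducible_poly (L %/ 'X))
  (E : fieldExtType F)
  (hsplit : splittingFieldFor 1%VS (map_poly (in_alg E) L) fullv)
  (v : n.-tuple E)
  (hfree : free v)
  (hspan : forall x : E, root (map_poly (in_alg E) L) x <-> x \in <<v>>%VS)
  (r : nat) (hr1 : (1 <= r)%N) (hr2 : (r <= q - 1)%N) :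
  {in [pred P : {mpoly F[n]} | homog_deg r P] &,
     injective (eval_at v)}.
Proof.
move=> P Q P_homog Q_homog eqPQ.
have q_gt1 : (1 < q)%N by rewrite -hq finNzRing_gt1.
have size_f := size_qpoly_divpX q_gt1 hL.
have n_gt0 : (0 < n)%N.
  by rewrite lt0n; apply: contraTneq hirr.1 => n0; rewrite size_f n0.
pose w := tnth v (Ordinal n_gt0).
have w_neq0 : w != 0 by apply: (free_not0 hfree); apply: mem_tnth.
have fw : root (map_poly (in_alg E) (L %/ 'X)) w.
  have /hspan : w \in <<v>>%VS by rewrite memv_span ?mem_tnth.
  rewrite -{1}(qpoly_divpXK q_gt1 hL) rmorphM /= map_polyX rootM rootX.
  by rewrite (negbTE w_neq0) orbF.
pose z := [tuple w ^+ (q ^ i) | i < n].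
have z_sep k : (0 < k < q)%N -> forall D : {mpoly F[n]}, D \is k.-homog ->
    mmap (in_alg E) (tnth z) D = 0 -> D = 0.
  move=> k_bnd D D_homog; rewrite (eq_mmap _ _ (fun i => tnth_mktuple _ i)).
  exact: forms_eval_pow_orbit_eq0 hirr fw w_neq0 size_f k_bnd D_homog.
have span_z : <<z>>%VS = <<v>>%VS.
  apply/eqP; rewrite eqEdim; apply/andP; split.
    apply/span_subvP => _ /tnthP[i ->]; rewrite tnth_mktuple -hspan -hq.
    by apply: root_map_expr_card; apply/hspan; rewrite memv_span ?mem_tnth.
  by rewrite (eqP hfree) (eqP (free_forms_eval (z_sep 1%N q_gt1))) !size_tuple.
have v_in_z i : tnth v i \in <<z>>%VS by rewrite span_z memv_span ?mem_tnth.
have r_bnd : (0 < r < q)%N by apply/andP; split; lia.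
apply/eqP; rewrite -subr_eq0; apply/eqP.
apply: (forms_eval_eq0_change_basis hfree v_in_z (z_sep r r_bnd)).
  by rewrite rpredB // dhomogE.
by rewrite mmapB; apply/eqP; rewrite subr_eq0; apply/eqP.
Qed.
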